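(* Let $q$ be a prime number, let $l\ge 2$ be an integer and let $N=q^{l}$. Then $$\mathbb{Q}\text{-}\mathcal{KS}(N)=\Bigl(\bigcup_{s\in\mathbb{Z}\setminus\{0\}}\Bigl\{\,q+\frac{d}{s}\;:\; d \text{ a positive integer with } d\mid (q^{l}-q)\Bigr\}\Bigr)\setminus\{0,N\}.$$
   Context: Every nonzero rational $\alpha$ is written $\alpha=\alpha_1/\alpha_2$ with $\alpha_1\in\mathbb{Z}$, $\alpha_2$ a positive integer and $\gcd(\alpha_1,\alpha_2)=1$. For an integer $N\ge 2$ and a nonzero rational $\alpha=\alpha_1/\alpha_2$, $N$ is called an $\alpha$-Korselt number if $N\neq\alpha$ and $\alpha_2p-\alpha_1$ divides $\alpha_2N-\alpha_1$ (in $\mathbb{Z}$) for every prime divisor $p$ of $N$. For a subset $\mathbb{A}\subseteq\mathbb{Q}$, the Korselt set $\mathbb{A}\text{-}\mathcal{KS}(N)$ is the set of all $\beta\in\mathbb{A}\setminus\{0,N\}$ such that $N$ is a $\beta$-Korselt number. Here $a\mid b$ means $b=ac$ for some integer $c$. *)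

From HB Require Import structures.
From mathcomp Require Import all_boot all_order all_algebra.
Set Implicit Arguments. Unset Strict Implicit. Unset Printing Implicit Defensive.
Import Order.TTheory GRing.Theory Num.Theory.
Local Open Scope ring_scope.

Definition korselt (N : nat) (alpha : rat) : Prop :=
  (2 <= N)%N /\ alpha != N%:R /\
  forall p : nat, prime p -> (p %| N)%N ->
    (denq alpha * p%:Z - numq alpha %| denq alpha * N%:Z - numq alpha)%Z.

Definition QKS (N : nat) (beta : rat) : Prop :=
  beta != 0 /\ beta != N%:R /\ korselt N beta.

From HB Require Import structures.
From mathcomp Require Import all_boot all_order all_algebra.
From mathcomp Require Import ring.
Import Order.TTheory GRing.Theory Num.Theory.
Local Open Scope ring_scope.

(* Write beta = a1/a2 and m = a2 q - a1.  The only prime factor of N = q^l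
   is q, and a2 N - a1 = m + a2 (N - q) with m coprime to a2, so N is a
   beta-Korselt number iff m divides N - q.  On the other hand
   beta = q - m/a2, and conversely beta = q + d/s forces m s = -a2 d, hence
   m | d by coprimality: so m | N - q iff beta = q + d/s for some d | N - q. *)

Lemma coprimez_denq_sub (b : rat) (z : int) :
  coprimez (denq b * z - numq b) (denq b).
Proof.
rewrite /coprimez gcdzC mulrC -[_ - _]/(z * denq b + - numq b) gcdzMDl gcdzN gcdzC.
exact: coprime_num_den.
Qed.

Lemma dvdz_sub_shift (a c p n : int) : coprimez (a * p - c) a ->
  (a * p - c %| a * n - c)%Z = (a * p - c %| n - p)%Z.
Proof.
move=> cop; have -> : a * n - c = (a * p - c) + a * (n - p) by ring.
by rewrite rpredDl ?dvdzz // Gauss_dvdzr.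
Qed.

Lemma korselt_prime_power (q l : nat) (b : rat) : prime q -> (0 < l)%N ->
  korselt (q ^ l) b <->
  b != (q ^ l)%:R /\ (denq b * q%:Z - numq b %| Posz (q ^ l - q)%N)%Z.
Proof.
move=> q_pr l_gt0; have q_gt1 := prime_gt1 q_pr.
have q_le_N : (q <= q ^ l)%N by rewrite -{1}(expn1 q) leq_exp2l.
have shiftE : (denq b * q%:Z - numq b %| denq b * (q ^ l)%:Z - numq b)%Z =
              (denq b * q%:Z - numq b %| Posz (q ^ l - q)%N)%Z.
  by rewrite dvdz_sub_shift ?coprimez_denq_sub // subzn.
split=> [[_ [bN korq]] | [bN dvdX]].
  by rewrite -shiftE; split=> //; apply: korq; rewrite ?dvdn_exp.
split; first exact: leq_trans q_gt1 q_le_N.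
split=> // p p_pr; rewrite Euclid_dvdX // l_gt0 andbT dvdn_prime2 // => /eqP->.
by rewrite shiftE.
Qed.

Lemma shifted_fraction_dvdz (b : rat) (z : int) (X : nat) : (0 < X)%N ->
  (exists s : int, s != 0 /\
     exists d : nat, (0 < d)%N /\ (d %| X)%N /\ b = z%:~R + d%:R / s%:~R) <->
  (denq b * z - numq b %| Posz X)%Z.
Proof.
move=> X_gt0; have den_neq0 : (denq b)%:~R != 0 :> rat by rewrite intr_eq0 denq_neq0.
have cop := coprimez_denq_sub b z.
set m := denq b * z - numq b in cop *.
split=> [[s [s_neq0 [d [_ [dX bE]]]]] | mX].
  have ms : m * s = - (denq b * d%:Z).
    apply: (@intr_inj rat); rewrite !rmorphM !rmorphN rmorphB /= rmorphM /=.
    by rewrite numqE bE; field; rewrite intr_eq0.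
  have md : (m %| d%:Z)%Z.
    by rewrite -(Gauss_dvdzr _ cop) -[_ * _]opprK -ms rpredN dvdz_mulr.
  by apply: dvdz_trans md _; exact: dX.
have m_neq0 : m != 0.
  by apply: contraTneq mX => ->; rewrite dvd0z -lt0n X_gt0.
(* With d = |m| = sgz m * m, this s gives d/s = -m/denq b. *)
exists (- (sgz m * denq b)); split.
  by rewrite oppr_eq0 mulf_neq0 ?sgz_eq0 ?denq_neq0.
exists `|m|%N; split; first by rewrite absz_gt0.
split; first exact: mX.
have sg_neq0 : (sgz m)%:~R != 0 :> rat by rewrite intr_eq0 sgz_eq0.
rewrite pmulrn abszEsg !rmorphM rmorphN rmorphM rmorphB rmorphM /=.
by rewrite -{1}(divq_num_den b); field; apply/andP.
Qed.

Theorem theorem3p1 (q l : nat) (hq : prime q) (hl : (2 <= l)%N) (beta : rat) :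
  QKS (q ^ l) beta <->
  ((exists s : int, s != 0 /\
      exists d : nat, (0 < d)%N /\ (d %| q ^ l - q)%N /\
        beta = q%:R + d%:R / s%:~R)
   /\ beta != 0 /\ beta != (q ^ l)%:R).
Proof.
have l_gt0 : (0 < l)%N by apply: leq_trans hl.
have X_gt0 : (0 < q ^ l - q)%N.
  by rewrite subn_gt0 -{1}(expn1 q) ltn_exp2l // prime_gt1.
have reprE := shifted_fraction_dvdz beta q%:Z _ X_gt0.
rewrite -pmulrn in reprE; split.
  move=> [b0 [bN /(korselt_prime_power _ _ beta hq l_gt0) [_ mX]]].
  by split=> //; apply/reprE.
move=> [/reprE mX [b0 bN]]; split=> //; split=> //.
exact/(korselt_prime_power _ _ beta hq l_gt0).
Qed.
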